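(* For all positive integers $m,n$, the cyclic simplicial rook graph $\mathcal{CSR}(m,n)$ is a Cayley graph.
   Context: For positive integers $m,n$, the cyclic simplicial rook graph $\mathcal{CSR}(m,n)$ is the graph whose vertices are the vectors $(a_1,\dots,a_m)\in\mathbb{Z}_n^m$ with $a_1+\cdots+a_m\equiv 0 \pmod n$, two vertices being adjacent if and only if their vectors differ in exactly two coordinates. For a group $\Gamma$ and a subset $S\subseteq\Gamma$ closed under inverses and not containing the identity, the Cayley graph $\mathrm{Cay}(\Gamma,S)$ has vertex set $\Gamma$, with $x,y$ adjacent iff $x^{-1}y\in S$. A graph is a Cayley graph if it is isomorphic to some $\mathrm{Cay}(\Gamma,S)$. *)

From HB Require Import structures.
From mathcomp Require Import all_boot all_fingroup.
Set Implicit Arguments. Unset Strict Implicit. Unset Printing Implicit Defensive.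

(* Z_n is represented by 'I_n with arithmetic taken modulo n (n >= 1).      *)
Definition csr_vertex (m n : nat) : Type :=
  {a : {ffun 'I_m -> 'I_n} | (\sum_(i < m) (a i : nat)) %% n == 0}.

Definition csr_adj (m n : nat) (u v : csr_vertex m n) : bool :=
  #|[set i : 'I_m | val u i != val v i]| == 2.

(* A (finite) graph (V, adj) is a Cayley graph if it is isomorphic to
   Cay(Gamma, S) for some group Gamma and inverse-closed S not containing 1;
   in Cay(Gamma,S), x ~ y iff x^-1 * y \in S. *)
Definition is_cayley_graph (V : finType) (adj : rel V) : Prop :=
  exists (gT : finGroupType) (S : {set gT}) (f : V -> gT),
    [/\ bijective f,
        (1 \notin S)%g,
        (forall x, x \in S -> (x^-1)%g \in S)
      & forall u v, adj u v = (((f u)^-1 * f v)%g \in S)].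

From HB Require Import structures.
From mathcomp Require Import all_boot all_fingroup ssralg zmodp.
Set Implicit Arguments. Unset Strict Implicit. Unset Printing Implicit Defensive.

Import GRing.Theory.

(* The vertices of CSR(m,n) form the kernel of the sum map Z_n^m -> Z_n, hence
   a group under coordinatewise addition, and translating two vectors by the
   same vector does not change the set of coordinates in which they differ.
   A translation-invariant graph on a group is the Cayley graph of the
   neighbourhood of the identity; here that is the set of vectors with exactly
   two nonzero coordinates. *)

Section TranslationInvariantGraph.

Local Open Scope group_scope.

Variables (gT : finGroupType) (adj : rel gT).
Hypotheses (adj_irr : irreflexive adj) (adj_sym : symmetric adj).
Hypothesis adj_mull : forall g u v, adj (g * u) (g * v) = adj u v.

Lemma adj_mulVl u v : adj u v = adj 1 (u^-1 * v).
Proof. by rewrite -(adj_mull u^-1) mulVg. Qed.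

Lemma translation_invariant_cayley : is_cayley_graph adj.
Proof.
exists gT, [set x | adj 1 x], id; split => [||x|u v]; rewrite ?inE.
- by exists id.
- by rewrite adj_irr.
- by move=> x1; rewrite adj_sym -(adj_mull x) mulgV mulg1.
- exact: adj_mulVl.
Qed.

End TranslationInvariantGraph.

Lemma val_Zp_sum (p : nat) (I : Type) (r : seq I) (F : I -> 'I_p.+1) :
  val (\sum_(i <- r) F i)%R = (\sum_(i <- r) val (F i)) %% p.+1.
Proof.
elim/big_rec2: _ => [|i s t _ IH]; first by rewrite mod0n.
by rewrite /= IH modnDmr.
Qed.

Section CSRGroup.

Local Open Scope ring_scope.

Variables m p : nat.

Local Notation in_csr a := ((\sum_(i < m) (a%R i : nat)) %% p.+1 == 0)%N.

Lemma in_csrE (a : {ffun 'I_m -> 'I_p.+1}) : in_csr a = (\sum_i a i == 0).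
Proof. by rewrite -val_eqE /= val_Zp_sum. Qed.

Lemma in_csr0 : in_csr (0 : {ffun 'I_m -> 'I_p.+1}).
Proof. by rewrite in_csrE big1 // => i _; rewrite ffunE. Qed.

Lemma in_csrD (a b : {ffun 'I_m -> 'I_p.+1}) :
  in_csr a -> in_csr b -> in_csr (a + b).
Proof.
rewrite !in_csrE => /eqP sa0 /eqP sb0.
under eq_bigr do rewrite ffunE.
by rewrite big_split /= sa0 sb0 addr0.
Qed.

Lemma in_csrN (a : {ffun 'I_m -> 'I_p.+1}) : in_csr a -> in_csr (- a).
Proof.
rewrite !in_csrE => /eqP sa0.
under eq_bigr do rewrite ffunE.
by rewrite sumrN sa0 oppr0.
Qed.

Definition csr_group := csr_vertex m p.+1.
HB.instance Definition _ := Finite.on csr_group.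

Definition csr_add (u v : csr_group) : csr_group :=
  exist _ (val u + val v) (in_csrD (valP u) (valP v)).
Definition csr_opp (u : csr_group) : csr_group := exist _ (- val u) (in_csrN (valP u)).
Definition csr_zero : csr_group := exist _ 0 in_csr0.

Lemma csr_addA : associative csr_add.
Proof. by move=> u v w; apply: val_inj; rewrite /= addrA. Qed.

Lemma csr_add0 : left_id csr_zero csr_add.
Proof. by move=> u; apply: val_inj; rewrite /= add0r. Qed.

Lemma csr_addN : left_inverse csr_zero csr_opp csr_add.
Proof. by move=> u; apply: val_inj; rewrite /= addNr. Qed.

HB.instance Definition _ := Finite_isGroup.Build csr_group csr_addA csr_add0 csr_addN.

Lemma csr_adj_irr : irreflexive (@csr_adj m p.+1).
Proof.
move=> u; rewrite /csr_adj.
under eq_finset do rewrite eqxx.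
by rewrite cards0.
Qed.

Lemma csr_adj_sym : symmetric (@csr_adj m p.+1).
Proof. by move=> u v; rewrite /csr_adj; under eq_finset do rewrite eq_sym. Qed.

Lemma csr_adj_mull (g u v : csr_group) :
  csr_adj (g * u)%g (g * v)%g = csr_adj u v.
Proof.
rewrite /csr_adj /=.
by under eq_finset do rewrite !ffunE (inj_eq (addrI _)).
Qed.

End CSRGroup.

Theorem lemma2 (m n : nat) (hm : 0 < m) (hn : 0 < n) :
  is_cayley_graph (@csr_adj m n).
Proof.
case: n hn => // p _.
exact: (@translation_invariant_cayley (csr_group m p) _
          (@csr_adj_irr m p) (@csr_adj_sym m p) (@csr_adj_mull m p)).
Qed.
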